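(* Let $p,d\ge 1$ be integers and let $0<u\le v$ be real numbers with $uv=1$. Let $W\in\mathbb{R}^{p\times d}$ and $\Omega_c\in\mathbb{S}_{++}^d$ be fixed, and let $W\Omega_cW^T$ be eigendecomposed as $Q\,\mathrm{diag}(\mathbf{r})\,Q^T$ with $Q$ orthogonal and $\mathbf{r}\in\mathbb{R}^p$. Then an optimal solution of the problem \[ \min_{\Omega_r}\ \operatorname{tr}(\Omega_r W\Omega_c W^T) - d\log\det(\Omega_r)\quad\text{subject to}\quad uI_p\preceq \Omega_r\preceq vI_p \] is given by $Q\,\mathrm{diag}\big(\mathbb{T}_{[u,v]}(d/\mathbf{r})\big)\,Q^T$.
   Context: $\mathbb{S}_{++}^d$ denotes real symmetric positive definite $d\times d$ matrices and $\preceq$ the Loewner order; the optimization is over symmetric positive definite $\Omega_r$. The thresholding function is $\mathbb{T}_{[u,v]}(x)=\max\{u,\min\{v,x\}\}$, and $\mathbb{T}_{[u,v]}(d/\mathbf{r})$ is the vector whose $i$-th entry is $\mathbb{T}_{[u,v]}(d/r_i)$ (with the convention $d/0=+\infty$, so that a zero eigenvalue is mapped to $v$). *)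

From HB Require Import structures.
From mathcomp Require Import all_boot all_order all_algebra.
From mathcomp Require Import all_classical all_reals all_analysis.
Set Implicit Arguments. Unset Strict Implicit. Unset Printing Implicit Defensive.
Import Order.TTheory GRing.Theory Num.Theory.
Local Open Scope ring_scope.

Section Defs.
Variable R : realType.

Definition symmx n (A : 'M[R]_n) : Prop := A^T = A.

Definition psdmx n (A : 'M[R]_n) : Prop :=
  symmx A /\ forall x : 'cV[R]_n, 0 <= (x^T *m A *m x) 0 0.

Definition spdmx n (A : 'M[R]_n) : Prop :=
  symmx A /\ forall x : 'cV[R]_n, x != 0 -> 0 < (x^T *m A *m x) 0 0.

Definition loewner_le n (A B : 'M[R]_n) : Prop := psdmx (B - A).

Definition orthomxR n (Q : 'M[R]_n) : Prop := Q *m Q^T = 1%:M /\ Q^T *m Q = 1%:M.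

Definition thr (u v x : R) : R := Num.max u (Num.min v x).

(* T_[u,v](d / x), with the convention d/0 = +oo so that x = 0 maps to v *)
Definition thr_div (u v : R) (d : nat) (x : R) : R :=
  if x == 0 then v else thr u v (d%:R / x).

Definition objective p d (W : 'M[R]_(p, d)) (Oc : 'M[R]_d) (Om : 'M[R]_p) : R :=
  \tr (Om *m (W *m Oc *m W^T)) - d%:R * ln (\det Om).

Definition feasible p (u v : R) (Om : 'M[R]_p) : Prop :=
  spdmx Om /\ loewner_le (u%:M) Om /\ loewner_le Om (v%:M).

End Defs.

From HB Require Import structures.
From mathcomp Require Import all_boot all_order all_algebra.
From mathcomp Require Import all_classical all_reals all_analysis.
From mathcomp Require Import lra ring.
Set Implicit Arguments. Unset Strict Implicit. Unset Printing Implicit Defensive.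
Import Order.TTheory GRing.Theory Num.Theory.
Local Open Scope ring_scope.

(* Conjugating by the orthogonal [Q] turns the objective at [Om] into
   [sum_i r_i B_ii - d ln det B] with [B = Q^T Om Q], and the constraint
   [u I <= Om <= v I] forces [u <= B_ii <= v].  Hadamard's inequality
   [det B <= prod_i B_ii] for positive definite [B] (proved by induction on
   Schur complements) bounds this from below by the separable sum
   [sum_i (r_i B_ii - d ln B_ii)], with equality when [B] is diagonal.  Each
   summand [x |-> r x - d ln x] is convex with critical point [d / r], so on
   [u, v] it is minimised by the clipped value [T_[u,v](d / r)]. *)

Section Quadratic_forms.
Variable R : realType.
Implicit Types (m n : nat).

Lemma quad_form_delta n (M : 'M[R]_n) j :
  ((delta_mx j (0 : 'I_1) : 'cV_n)^T *m M *m delta_mx j (0 : 'I_1)) 0 0 = M j j.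
Proof. by rewrite trmx_delta -mulmxA -colE -rowE !mxE. Qed.

Lemma quad_form_diag n (s : 'rV[R]_n) (x : 'cV_n) :
  (x^T *m diag_mx s *m x) 0 0 = \sum_i s 0 i * x i 0 ^+ 2.
Proof.
by rewrite mul_mx_diag mxE; apply: eq_bigr => i _; rewrite !mxE mulrAC -expr2 mulrC.
Qed.

Lemma quad_form_congr m n (P : 'M[R]_(m, n)) (M : 'M[R]_m) (x : 'cV_n) :
  x^T *m (P^T *m M *m P) *m x = (P *m x)^T *m M *m (P *m x).
Proof. by rewrite trmx_mul !mulmxA. Qed.

Lemma symmx_congr m n (P : 'M[R]_(m, n)) (M : 'M[R]_m) :
  symmx M -> symmx (P^T *m M *m P).
Proof. by move=> sM; rewrite /symmx !trmx_mul trmxK sM mulmxA. Qed.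

Lemma psdmx_congr m n (P : 'M[R]_(m, n)) (M : 'M[R]_m) :
  psdmx M -> psdmx (P^T *m M *m P).
Proof.
by move=> [sM M_ge0]; split=> [|x]; [exact: symmx_congr | rewrite quad_form_congr].
Qed.

Lemma spdmx_congr n (P M : 'M[R]_n) :
  P \in unitmx -> spdmx M -> spdmx (P^T *m M *m P).
Proof.
move=> Pu [sM M_gt0]; split=> [|x x_neq0]; first exact: symmx_congr.
rewrite quad_form_congr; apply: M_gt0; apply: contra x_neq0 => /eqP Px0.
by rewrite -(mulKmx Pu x) Px0 mulmx0.
Qed.

Lemma spdmx_psdmx n (M : 'M[R]_n) : spdmx M -> psdmx M.
Proof.
move=> [sM M_gt0]; split=> // x.
by have [->|/M_gt0/ltW//] := eqVneq x 0; rewrite mulmx0 mxE.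
Qed.

Lemma psdmx_diag_ge0 n (M : 'M[R]_n) i : psdmx M -> 0 <= M i i.
Proof. by move=> [_ M_ge0]; rewrite -quad_form_delta. Qed.

Lemma spdmx_diag_gt0 n (M : 'M[R]_n) i : spdmx M -> 0 < M i i.
Proof.
move=> [_ M_gt0]; rewrite -quad_form_delta; apply: M_gt0.
by apply/negP => /eqP/matrixP/(_ i 0); rewrite !mxE !eqxx; apply/eqP/oner_neq0.
Qed.

Lemma psdmx_diag_mx n (s : 'rV[R]_n) : (forall i, 0 <= s 0 i) -> psdmx (diag_mx s).
Proof.
move=> s_ge0; split=> [|x]; first by rewrite /symmx tr_diag_mx.
by rewrite quad_form_diag sumr_ge0 // => i _; rewrite mulr_ge0 ?sqr_ge0.
Qed.

Lemma spdmx_diag_mx n (s : 'rV[R]_n) : (forall i, 0 < s 0 i) -> spdmx (diag_mx s).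
Proof.
move=> s_gt0; split=> [|x x_neq0]; first by rewrite /symmx tr_diag_mx.
have terms_ge0 i : true -> 0 <= s 0 i * x i 0 ^+ 2.
  by rewrite mulr_ge0 ?sqr_ge0 ?ltW.
rewrite quad_form_diag lt_def sumr_ge0 // andbT.
apply: contra x_neq0 => /eqP/(psumr_eq0P terms_ge0) x0.
apply/eqP/matrixP => i j; rewrite ord1 mxE.
by have /eqP := x0 i isT; rewrite mulf_eq0 gt_eqF //= sqrf_eq0 => /eqP.
Qed.

Lemma loewner_le_congr m n (P : 'M[R]_(m, n)) (A B : 'M[R]_m) :
  loewner_le A B -> loewner_le (P^T *m A *m P) (P^T *m B *m P).
Proof. by move=> /(psdmx_congr P); rewrite /loewner_le mulmxBr mulmxBl. Qed.

Lemma loewner_le_diag n (A B : 'M[R]_n) i : loewner_le A B -> A i i <= B i i.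
Proof. by move=> /(psdmx_diag_ge0 i); rewrite !mxE subr_ge0. Qed.

Lemma loewner_le_diag_mx n (s s' : 'rV[R]_n) :
  (forall i, s 0 i <= s' 0 i) -> loewner_le (diag_mx s) (diag_mx s').
Proof.
move=> le_ss'; rewrite /loewner_le -linearB.
by apply: psdmx_diag_mx => i; rewrite !mxE subr_ge0.
Qed.

Lemma conj_scalar_mx n (P P' : 'M[R]_n) (a : R) :
  P *m P' = 1%:M -> P *m a%:M *m P' = a%:M.
Proof. by move=> PP'; rewrite mul_mx_scalar -scalemxAl PP' scalemx1. Qed.

Lemma feasible_conj_diag p (u v : R) (Q : 'M[R]_p) (s : 'rV[R]_p) :
  Q *m Q^T = 1%:M -> 0 < u -> (forall i, u <= s 0 i <= v) ->
  feasible u v (Q *m diag_mx s *m Q^T).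
Proof.
move=> QQt u_gt0 s_uv; have [_ Qtu] := mulmx1_unit QQt.
have s_gt0 i : 0 < s 0 i := lt_le_trans u_gt0 (andP (s_uv i)).1.
have conjE M : Q *m M *m Q^T = Q^T^T *m M *m Q^T by rewrite trmxK.
rewrite /feasible -(conj_scalar_mx u QQt) -(conj_scalar_mx v QQt).
rewrite -!diag_const_mx !conjE.
split; first exact: spdmx_congr Qtu (spdmx_diag_mx s_gt0).
by split; apply: loewner_le_congr; apply: loewner_le_diag_mx => i;
  rewrite mxE; case/andP: (s_uv i).
Qed.

End Quadratic_forms.

Section Hadamard.
Variable R : realType.
Implicit Types (m n : nat).

Lemma quad_form_col_mx0 m n (M : 'M[R]_(m + n)) (y : 'cV_n) :
  (col_mx 0 y)^T *m M *m col_mx 0 y = y^T *m drsubmx M *m y.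
Proof.
rewrite -[M in LHS]submxK tr_col_mx trmx0 mul_row_block !mul0mx !add0r.
by rewrite mul_row_col mulmx0 add0r.
Qed.

Lemma spdmx_drsubmx m n (M : 'M[R]_(m + n)) : spdmx M -> spdmx (drsubmx M).
Proof.
move=> [sM M_gt0]; split=> [|y y_neq0]; first by rewrite /symmx trmx_drsub sM.
rewrite -quad_form_col_mx0; apply: M_gt0.
by rewrite col_mx_eq0 negb_and y_neq0 orbT.
Qed.

Definition schur_compl n (B : 'M[R]_(1 + n)) : 'M[R]_n :=
  drsubmx B - (B ord0 ord0)^-1 *: (dlsubmx B *m (dlsubmx B)^T).

Definition schur_elim n (B : 'M[R]_(1 + n)) : 'M[R]_(1 + n) :=
  block_mx 1 0 (- (B ord0 ord0)^-1 *: dlsubmx B) 1.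

Lemma det_schur_elim n (B : 'M[R]_(1 + n)) : \det (schur_elim B) = 1.
Proof. by rewrite det_lblock !det1 mulr1. Qed.

Lemma schur_elimP n (B : 'M[R]_(1 + n)) : symmx B -> B ord0 ord0 != 0 ->
  schur_elim B *m B *m (schur_elim B)^T
  = block_mx (B ord0 ord0)%:M 0 0 (schur_compl B).
Proof.
rewrite /schur_elim /schur_compl; set a := B ord0 ord0; set b := dlsubmx B.
move=> sB a_neq0.
have ulB : ulsubmx B = a%:M.
  by rewrite [LHS]mx11_scalar !mxE; congr (B _ _)%:M; apply: val_inj.
have urB : ursubmx B = b^T by rewrite /b trmx_dlsub sB.
rewrite -[X in _ *m X *m _]submxK ulB urB tr_block_mx !mulmx_block.
have ab : (- a^-1 *: b) *m a%:M = - b.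
  by rewrite mul_mx_scalar scalerA mulrN mulfV // scaleN1r.
rewrite ab !mul1mx addNr !trmx0 !trmx1 !mul0mx !mulmx0 !mulmx1 !addr0 add0r.
rewrite mul_scalar_mx linearZ /= scalerA mulrN mulfV // scaleN1r addNr.
by rewrite addrC -scalemxAl scaleNr.
Qed.

Lemma det_schur_compl n (B : 'M[R]_(1 + n)) : symmx B -> B ord0 ord0 != 0 ->
  \det B = B ord0 ord0 * \det (schur_compl B).
Proof.
move=> sB a_neq0; have := congr1 determinant (schur_elimP sB a_neq0).
by rewrite !det_mulmx det_tr det_schur_elim mul1r mulr1 det_ublock det_scalar1.
Qed.

Lemma spdmx_schur_compl n (B : 'M[R]_(1 + n)) : spdmx B -> spdmx (schur_compl B).
Proof.
move=> spdB; have a_neq0 : B ord0 ord0 != 0 by rewrite gt_eqF ?spdmx_diag_gt0.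
have Lu : (schur_elim B)^T \in unitmx.
  by rewrite unitmx_tr unitmxE det_schur_elim unitr1.
have := spdmx_congr Lu spdB; rewrite trmxK (schur_elimP spdB.1 a_neq0).
by move/spdmx_drsubmx; rewrite block_mxKdr.
Qed.

Lemma schur_compl_diag_le n (B : 'M[R]_(1 + n)) i : spdmx B ->
  schur_compl B i i <= drsubmx B i i.
Proof.
move=> spdB; have a_gt0 : 0 < B ord0 ord0 by exact: spdmx_diag_gt0.
rewrite mxE [X in _ + X]mxE gerDl oppr_le0 !mxE.
apply: mulr_ge0; first by rewrite invr_ge0 ltW.
by apply: sumr_ge0 => k _; rewrite !mxE -expr2 sqr_ge0.
Qed.

Lemma spdmx_det_gt0 n (B : 'M[R]_n) : spdmx B -> 0 < \det B.
Proof.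
elim: n B => [B _|n IH B spdB]; first by rewrite det_mx00.
have a_gt0 : 0 < B ord0 ord0 by exact: spdmx_diag_gt0.
rewrite (det_schur_compl spdB.1) ?gt_eqF //.
exact: mulr_gt0 a_gt0 (IH _ (spdmx_schur_compl spdB)).
Qed.

Lemma hadamard_spdmx n (B : 'M[R]_n) : spdmx B -> \det B <= \prod_i B i i.
Proof.
elim: n B => [B _|n IH B spdB]; first by rewrite det_mx00 big_ord0.
have a_gt0 : 0 < B ord0 ord0 by exact: spdmx_diag_gt0.
have spdS := spdmx_schur_compl spdB.
rewrite (det_schur_compl spdB.1) ?gt_eqF // big_ord_recl ler_pM2l //.
apply: le_trans (IH _ spdS) _; apply: ler_prod => i _.
have -> : B (lift ord0 i) (lift ord0 i) = drsubmx (B : 'M[R]_(1 + n)) i i.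
  by rewrite !mxE; congr (B _ _); apply: val_inj.
by rewrite ltW ?spdmx_diag_gt0 ?schur_compl_diag_le.
Qed.

Lemma ln_prod (I : finType) (t : I -> R) : (forall i, 0 < t i) ->
  ln (\prod_i t i) = \sum_i ln (t i).
Proof.
move=> t_gt0; pose K (x y : R) := 0 < x /\ ln x = y.
suff [] : K (\prod_i t i) (\sum_i ln (t i)) by [].
apply: (big_rec2 K); first by split; [exact: ltr01 | exact: ln1].
by move=> i x y _ [x_gt0 <-]; split; rewrite ?mulr_gt0 ?lnM ?posrE.
Qed.

Lemma ln_det_le_sum_ln_diag n (B : 'M[R]_n) : spdmx B ->
  ln (\det B) <= \sum_i ln (B i i).
Proof.
move=> spdB; have diag_gt0 i : 0 < B i i by exact: spdmx_diag_gt0.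
rewrite -ln_prod // ler_ln ?posrE ?spdmx_det_gt0 ?prodr_gt0 //.
exact: hadamard_spdmx.
Qed.

End Hadamard.

Section Thresholding.
Variable R : realType.

Lemma ln_le_tangent (x t : R) : 0 < x -> 0 < t -> ln x <= ln t + (x - t) / t.
Proof.
move=> x_gt0 t_gt0; rewrite -lerBlDl -ln_div ?posrE // mulrBl mulfV ?gt_eqF //.
have := @le_ln1Dx R (x / t - 1); rewrite addrCA subrr addr0; apply.
by rewrite ltrBrDl subrr divr_gt0.
Qed.

Lemma thr_div_bounds (u v : R) d x : u <= v -> u <= thr_div u v d x <= v.
Proof.
move=> uv; rewrite /thr_div; case: eqP => _; first by rewrite uv lexx.
by rewrite /thr le_max ge_max ge_min !lexx uv.
Qed.

Variables (u v : R) (d : nat).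
Hypotheses (u_gt0 : 0 < u) (uv : u <= v).

(* The first-order optimality condition of [x |-> x r - d ln x] on [u, v]. *)
Lemma thr_div_first_order r x : 0 <= r -> u <= x <= v ->
  0 <= (x - thr_div u v d r) * (r - d%:R / thr_div u v d r).
Proof.
move=> r_ge0 /andP[ux xv]; rewrite /thr_div.
have v_gt0 : 0 < v := lt_le_trans u_gt0 uv.
case: eqP => [->|/eqP r_neq0].
  by rewrite mulr_le0 ?subr_le0 // divr_ge0 ?ler0n ?(ltW v_gt0).
have r_gt0 : 0 < r by rewrite lt_def r_neq0.
set y := d%:R / r; set t := thr u v y.
have t_gt0 : 0 < t by rewrite (lt_le_trans u_gt0) // /t /thr le_max lexx.
have -> : r - d%:R / t = r / t * (t - y)
  by rewrite /y; field; rewrite !gt_eqF.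
rewrite mulrCA mulr_ge0 ?divr_ge0 ?(ltW r_gt0) ?(ltW t_gt0) // /t /thr.
have [yu|uy] := leP y u.
  by rewrite min_r ?(le_trans yu) // max_l // mulr_ge0 ?subr_ge0.
have [vy|yv] := leP v y; first by rewrite max_r // mulr_le0 ?subr_le0.
by rewrite (max_r (ltW uy)) subrr mulr0.
Qed.

(* Convexity: [x |-> x r - d ln x] lies above its tangent at the threshold. *)
Lemma thr_div_argmin r x : 0 <= r -> u <= x <= v ->
  thr_div u v d r * r - d%:R * ln (thr_div u v d r) <= x * r - d%:R * ln x.
Proof.
move=> r_ge0 x_uv; have := thr_div_first_order r_ge0 x_uv.
have /andP[ut _] := thr_div_bounds d r uv; set t := thr_div u v d r.
have t_gt0 : 0 < t := lt_le_trans u_gt0 ut.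
have x_gt0 : 0 < x := lt_le_trans u_gt0 (andP x_uv).1.
have := ler_wpM2l (ler0n R d) (ln_le_tangent x_gt0 t_gt0).
have -> : d%:R * (ln t + (x - t) / t) = d%:R * ln t + (x - t) * (d%:R / t).
  by field; rewrite gt_eqF.
rewrite mulrBr; lra.
Qed.

End Thresholding.

Section Objective.
Variable R : realType.

Definition diag_objective p d (r : 'rV[R]_p) (s : 'I_p -> R) : R :=
  \sum_i (s i * r 0 i - d%:R * ln (s i)).

Variables (p d : nat) (W : 'M[R]_(p, d)) (Oc : 'M[R]_d).
Variables (Q : 'M[R]_p) (r : 'rV[R]_p).
Hypotheses (QtQ : Q^T *m Q = 1%:M)
  (W_eigen : W *m Oc *m W^T = Q *m diag_mx r *m Q^T).

Lemma conj_orthomx_diag (s : 'rV[R]_p) :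
  Q^T *m (Q *m diag_mx s *m Q^T) *m Q = diag_mx s.
Proof. by rewrite !mulmxA QtQ mul1mx -mulmxA QtQ mulmx1. Qed.

Lemma objective_conj (Om : 'M[R]_p) :
  objective W Oc Om =
  \sum_i (Q^T *m Om *m Q) i i * r 0 i - d%:R * ln (\det (Q^T *m Om *m Q)).
Proof.
have detQ : \det Q^T * \det Q = 1 by rewrite -det_mulmx QtQ det1.
rewrite /objective W_eigen !det_mulmx mulrAC detQ mul1r.
rewrite !mulmxA mxtrace_mulC !mulmxA /mxtrace; congr (_ - _).
by apply: eq_bigr => i _; rewrite mul_mx_diag !mxE.
Qed.

Lemma eigen_ge0 (hOc : spdmx Oc) i : 0 <= r 0 i.
Proof.
have psd_WOcWt : psdmx (W *m Oc *m W^T).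
  by rewrite -{1}(trmxK W); exact: psdmx_congr (spdmx_psdmx hOc).
have := psdmx_diag_ge0 i (psdmx_congr Q psd_WOcWt).
by rewrite W_eigen conj_orthomx_diag mxE eqxx mulr1n.
Qed.

Lemma objective_conj_diag (s : 'rV[R]_p) : (forall i, 0 < s 0 i) ->
  objective W Oc (Q *m diag_mx s *m Q^T) = diag_objective d r (fun i => s 0 i).
Proof.
move=> s_gt0; rewrite objective_conj conj_orthomx_diag det_diag ln_prod //.
rewrite /diag_objective sumrB mulr_sumr; congr (_ - _).
by apply: eq_bigr => i _; rewrite mxE eqxx mulr1n.
Qed.

Lemma diag_objective_le_objective (Om : 'M[R]_p) : spdmx Om ->
  diag_objective d r (fun i => (Q^T *m Om *m Q) i i) <= objective W Oc Om.
Proof.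
move=> spdOm; have Qu : Q \in unitmx by case: (mulmx1_unit QtQ).
rewrite objective_conj /diag_objective sumrB -mulr_sumr lerD2l lerN2.
by rewrite ler_wpM2l //; exact: ln_det_le_sum_ln_diag (spdmx_congr Qu spdOm).
Qed.

End Objective.

Theorem corollary1 (R : realType) (p d : nat) (hp : (0 < p)%N) (hd : (0 < d)%N)
    (u v : R) (hu : 0 < u) (huv : u <= v) (huv1 : u * v = 1)
    (W : 'M[R]_(p, d)) (Oc : 'M[R]_d) (hOc : spdmx Oc)
    (Q : 'M[R]_p) (r : 'rV[R]_p) (hQ : orthomxR Q)
    (hdec : W *m Oc *m W^T = Q *m diag_mx r *m Q^T) :
  let Ostar := Q *m diag_mx (\row_i thr_div u v d (r 0 i)) *m Q^T in
  feasible u v Ostar /\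
  forall Om : 'M[R]_p, feasible u v Om ->
    objective W Oc Ostar <= objective W Oc Om.
Proof.
move=> Ostar; have [QQt QtQ] := hQ.
set t := \row_i thr_div u v d (r 0 i).
have t_uv i : u <= t 0 i <= v by rewrite mxE thr_div_bounds.
have t_gt0 i : 0 < t 0 i := lt_le_trans hu (andP (t_uv i)).1.
split=> [|Om [spdOm [uOm Omv]]]; first exact: feasible_conj_diag.
apply: le_trans (diag_objective_le_objective QtQ hdec spdOm).
rewrite (objective_conj_diag QtQ hdec t_gt0); apply: ler_sum => i _.
have Om_uv : u <= (Q^T *m Om *m Q) i i <= v.
  have /(loewner_le_diag i) := loewner_le_congr Q uOm.
  have /(loewner_le_diag i) := loewner_le_congr Q Omv.
  by rewrite !conj_scalar_mx // !mxE eqxx mulr1n => -> ->.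
by rewrite mxE thr_div_argmin // (eigen_ge0 QtQ hdec hOc).
Qed.
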